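(* $C_{AD}(3,4)=C_{CD}(3,4)=4$.
   Context: There are $n$ nodes labeled $1,\dots,n$ (here $n=3$); node $i$ privately holds an input $x_i\in\{1,\dots,M\}$ (here $M=4$). Communication is over private point-to-point links of a fully connected synchronous network. A deterministic protocol $P$ is a fixed finite schedule of steps $l=1,\dots,L(P)$; in step $l$ a prescribed node $T_l$ sends to a prescribed node $R_l\neq T_l$ one symbol $f_l(x_{T_l},T_l^+(l))$, where $T_l^+(l)$ is the sequence of symbols $T_l$ has received in steps $1,\dots,l-1$; only $R_l$ receives it. Its complexity is $C(P)=\sum_{l}\log_2 S_l(P)$, with $S_l(P)$ the number of distinct values of the step-$l$ symbol over all inputs in $\{1,\dots,M\}^n$. At the end each node $i$ outputs a bit $EQ_i$ depending on $x_i$ and the symbols it received. $P$ solves MEQ-AD$(n,M)$ if for every input, $EQ_1=\cdots=EQ_n=0$ iff $x_1=\cdots=x_n$; $P$ solves MEQ-CD$(n,M)$ if for every input, $EQ_n=0$ iff $x_1=\cdots=x_n$. $C_{AD}(n,M)$ and $C_{CD}(n,M)$ are the infima of $C(P)$ over protocols solving MEQ-AD$(n,M)$, respectively MEQ-CD$(n,M)$. *)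

From Stdlib Require Import Reals.
From mathcomp Require Import all_boot.
Set Implicit Arguments. Unset Strict Implicit. Unset Printing Implicit Defensive.

(* Nodes are 'I_n (node i+1 of the paper is ordinal i); inputs are 'I_M
   (value k of 'I_M stands for the paper's input k+1 in {1,...,M}).
   Symbols are natural numbers (w.l.o.g.: only the number of distinct
   values matters). *)

(* One step: transmitter T, receiver R, and the symbol function f of
   (x_T, sequence of symbols received by T so far). *)
Record step (n M : nat) := Step {
  st_T : 'I_n;
  st_R : 'I_n;
  st_f : 'I_M -> seq nat -> nat }.

Record protocol (n M : nat) := Protocol {
  steps : seq (step n M);
  outs : 'I_n -> 'I_M -> seq nat -> bool;
  steps_wf : all (fun s => st_T s != st_R s) steps }.

(* history = list of (receiver, symbol) of the steps executed so far *)
Definition recv {n} (hist : seq ('I_n * nat)) (i : 'I_n) : seq nat :=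
  [seq p.2 | p <- hist & p.1 == i].

Fixpoint run_from {n M} (ps : seq (step n M)) (x : {ffun 'I_n -> 'I_M})
    (hist : seq ('I_n * nat)) : seq ('I_n * nat) :=
  match ps with
  | [::] => hist
  | s :: ps' =>
      run_from ps' x
        (rcons hist (st_R s, st_f s (x (st_T s)) (recv hist (st_T s))))
  end.

Definition trace {n M} (P : protocol n M) (x : {ffun 'I_n -> 'I_M}) :=
  run_from (steps P) x [::].

(* symbol sent at step l (0-based) on input x *)
Definition symbol {n M} (P : protocol n M) (l : nat) (x : {ffun 'I_n -> 'I_M}) : nat :=
  nth 0 [seq p.2 | p <- trace P x] l.

Definition S_l {n M} (P : protocol n M) (l : nat) : nat :=
  size (undup [seq symbol P l x | x <- enum {ffun 'I_n -> 'I_M}]).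

Definition log2R (r : R) : R := Rdiv (ln r) (ln (INR 2)).

Definition cost {n M} (P : protocol n M) : R :=
  \big[Rplus/R0]_(l < size (steps P)) log2R (INR (S_l P l)).

Definition EQ {n M} (P : protocol n M) (x : {ffun 'I_n -> 'I_M}) (i : 'I_n) : bool :=
  outs P i (x i) (recv (trace P x) i).

Definition all_equal {n M} (x : {ffun 'I_n -> 'I_M}) : Prop :=
  forall i j : 'I_n, x i = x j.

Definition solves_AD {n M} (P : protocol n M) : Prop :=
  forall x : {ffun 'I_n -> 'I_M},
    (forall i, EQ P x i = false) <-> all_equal x.

Definition solves_CD {n M} (P : protocol n.+1 M) : Prop :=
  forall x : {ffun 'I_n.+1 -> 'I_M},
    EQ P x ord_max = false <-> all_equal x.

Definition is_infimum (E : R -> Prop) (m : R) : Prop :=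
  (forall c, E c -> Rle m c) /\
  (forall m', (forall c, E c -> Rle m' c) -> Rle m' m).

Definition C_AD_is (n M : nat) (v : R) : Prop :=
  is_infimum (fun c => exists P : protocol n M, solves_AD P /\ c = cost P) v.

Definition C_CD_is (n M : nat) (v : R) : Prop :=
  is_infimum (fun c => exists P : protocol n.+1 M, solves_CD P /\ c = cost P) v.

From Stdlib Require Import Reals Lra.
From mathcomp Require Import all_boot.
Set Implicit Arguments. Unset Strict Implicit. Unset Printing Implicit Defensive.

(* For a step l and a value c, let v_l(c) be the symbol sent at step l on the
   constant input (c, c, c), and let g_ij(c) be the sequence of the v_l(c) over
   the steps on the link {i, j}.  If g_01(a) = g_01(b), g_02(a) = g_02(c) and
   g_12(b) = g_12(c), then on the input (a, b, c) every link carries what it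
   carries in the constant runs of both its endpoints, so by induction on the
   schedule each node receives exactly what it receives on its own constant
   input; a correct protocol must then answer "equal", forcing a = b = c.
   A finite check over all triples of partitions of a 4-element set shows that
   for three maps with this property the product of their numbers of values is
   at least 16; for g_01, g_02, g_12 that product is at most prod_l S_l, since
   the links partition the steps, whence C(P) >= log2 16 = 4.  Conversely,
   forwarding two inputs along a chain (for AD) or to the last node (for CD)
   costs 2 log2 4 = 4. *)

(** * Numbers of values and canonical labellings *)

Definition nvalues (A : finType) (T : eqType) (g : A -> T) : nat := size (undup (codom g)).

Lemma size_undup_map_ker (A T T' : eqType) (s : seq A) (f : A -> T) (f' : A -> T') :
  {in s &, forall a b, (f a == f b) = (f' a == f' b)} ->
  size (undup (map f s)) = size (undup (map f' s)).
Proof.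
elim: s => //= x s IH ker.
have ker' : {in s &, forall a b, (f a == f b) = (f' a == f' b)}.
  by move=> a b sa sb; apply: ker; rewrite inE ?sa ?sb orbT.
have -> : (f x \in map f s) = (f' x \in map f' s).
  apply/mapP/mapP => -[y sy e]; exists y => //; apply/eqP.
  - by rewrite -ker ?inE ?eqxx ?sy ?orbT // e.
  - by rewrite ker ?inE ?eqxx ?sy ?orbT // e.
by case: ifP => _ /=; rewrite IH.
Qed.

Lemma nvalues_comp (A B : finType) (T : eqType) (g : B -> T) (h : A -> B) :
  nvalues (g \o h) <= nvalues g.
Proof.
apply: uniq_leq_size; first exact: undup_uniq.
by move=> y; rewrite !mem_undup => /codomP[a ->]; exact: codom_f.
Qed.

Lemma nvalues_const (A : finType) (T : eqType) (t : T) : nvalues (fun _ : A => t) <= 1.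
Proof.
apply: (@uniq_leq_size _ _ [:: t]) => [|y]; first exact: undup_uniq.
by rewrite mem_undup => /codomP[_ ->]; rewrite mem_head.
Qed.

Lemma nvalues_pair (A : finType) (T1 T2 : eqType) (g1 : A -> T1) (g2 : A -> T2) :
  nvalues (fun a => (g1 a, g2 a)) <= nvalues g1 * nvalues g2.
Proof.
rewrite /nvalues -(size_allpairs pair); apply: uniq_leq_size; first exact: undup_uniq.
move=> y; rewrite mem_undup => /codomP[a ->].
by apply/allpairsP; exists (g1 a, g2 a); rewrite !mem_undup !codom_f.
Qed.

Lemma nvalues_seq (A : finType) (I : Type) (T : eqType) (s : seq I) (F : I -> A -> T) :
  nvalues (fun a => [seq F i a | i <- s]) <= \prod_(i <- s) nvalues (F i).
Proof.
elim: s => [|i s IH]; first by rewrite big_nil nvalues_const.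
rewrite big_cons; apply: leq_trans (leq_mul (leqnn _) IH).
apply: leq_trans (nvalues_pair _ _); rewrite /nvalues !codomE.
by rewrite (size_undup_map_ker (f' := fun a => (F i a, [seq F i a | i <- s]))).
Qed.

Lemma eq_nvalues (A : finType) (T : eqType) (g g' : A -> T) : g =1 g' -> nvalues g = nvalues g'.
Proof. by move=> gg'; rewrite /nvalues !codomE (eq_map gg'). Qed.

Lemma nvalues_le_card (A : finType) (T : eqType) (g : A -> T) : nvalues g <= #|A|.
Proof. by rewrite -(size_codom g) size_undup. Qed.

Lemma prod_predU (I : Type) (r : seq I) (P Q : pred I) (F : I -> nat) :
  (forall i, P i -> Q i = false) ->
  \prod_(i <- r | P i || Q i) F i = \prod_(i <- r | P i) F i * \prod_(i <- r | Q i) F i.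
Proof.
move=> PQ; rewrite (bigID P); congr (_ * _); apply: eq_bigl => i.
  by rewrite andb_idl // => ->.
by case: (P i) (PQ i) => [/(_ isT) ->|] /=; rewrite ?andbT.
Qed.

Lemma leq_prod_cond (I : Type) (r : seq I) (P : pred I) (F : I -> nat) :
  (forall i, 0 < F i) -> \prod_(i <- r | P i) F i <= \prod_(i <- r) F i.
Proof. by move=> F_gt0; rewrite [leqRHS](bigID P) /= leq_pmulr // prodn_gt0. Qed.

(* [labels s] replaces each entry of [s] by the position of its first occurrence;
   it has the same kernel as [s], and its fixed points of length [k] are the
   restricted growth strings, one for each partition of a [k]-set. *)
Definition labels (T : eqType) (s : seq T) : seq nat := [seq index x s | x <- s].

Lemma index_map_in (A B : eqType) (f : A -> B) (s : seq A) (x : A) :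
  {in s &, injective f} -> x \in s -> index (f x) (map f s) = index x s.
Proof.
elim: s => //= y s IH inj; have [->|nyx] := eqVneq y x; first by rewrite eqxx.
rewrite inE eq_sym (negbTE nyx) /= => sx.
have [fyx|] := eqVneq (f y) (f x).
  by case/eqP: nyx; apply: inj; rewrite ?inE ?eqxx ?sx ?orbT.
by rewrite IH // => a b sa sb; apply: inj; rewrite inE ?sa ?sb orbT.
Qed.

Lemma labels_idem (T : eqType) (s : seq T) : labels (labels s) = labels s.
Proof.
rewrite {1}/labels -map_comp; apply/eq_in_map => x sx /=.
by rewrite (index_map_in (f := index^~ s)) //; exact: index_inj.
Qed.

Lemma size_undup_labels (T : eqType) (s : seq T) : size (undup (labels s)) = size (undup s).
Proof.
rewrite -[s in RHS]map_id; apply: size_undup_map_ker => x y sx sy.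
by apply/eqP/eqP => [|-> //]; exact: index_inj.
Qed.

Fixpoint words (k m : nat) : seq (seq nat) :=
  if k is k'.+1 then [seq a :: w | a <- iota 0 m, w <- words k' m] else [:: [::]].

Lemma mem_words k m s : (s \in words k m) = (size s == k) && all (gtn m) s.
Proof.
elim: k s => [|k IH] [|a s] //=.
  by apply/negbTE/allpairsP => -[[b w] [_ _]].
apply/allpairsP/idP => [[[b w] /= [+ + [-> ->]]]|].
  by rewrite mem_iota IH eqSS => /andP[_ ->] /andP[-> ->].
by rewrite eqSS => /and3P[sk am wm]; exists (a, s); rewrite mem_iota IH sk am wm.
Qed.

Definition canonical_labellings (k : nat) : seq (seq nat) :=
  [seq s <- words k k | labels s == s].

Lemma labels_canonical (T : eqType) (s : seq T) : labels s \in canonical_labellings (size s).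
Proof.
rewrite mem_filter labels_idem eqxx mem_words size_map eqxx /=.
by apply/allP => _ /mapP[x sx ->]; rewrite /= index_mem.
Qed.

Definition triangle_free (A T1 T2 T3 : Type) (g1 : A -> T1) (g2 : A -> T2) (g3 : A -> T3) :=
  forall a b c, g1 a = g1 b -> g2 a = g2 c -> g3 b = g3 c -> a = b /\ b = c.

Definition triangle_freeb (A T1 T2 T3 : eqType) (D : seq A)
    (g1 : A -> T1) (g2 : A -> T2) (g3 : A -> T3) : bool :=
  all (fun a => all (fun b => all (fun c =>
    [&& g1 a == g1 b, g2 a == g2 c & g3 b == g3 c] ==> (a == b) && (b == c)) D) D) D.

Lemma index_codom_eq (A : finType) (T : eqType) (g : A -> T) a b :
  (index (g a) (codom g) == index (g b) (codom g)) = (g a == g b).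
Proof.
by apply/eqP/eqP => [e|-> //]; exact: (index_inj (g a) (codom_f g a) (codom_f g b) e).
Qed.

Lemma nth_labels_codom k (T : eqType) (g : 'I_k -> T) (a : 'I_k) :
  nth 0 (labels (codom g)) a = index (g a) (codom g).
Proof.
rewrite (nth_map (g a)) ?size_codom ?card_ord // codomE (nth_map a) ?size_enum_ord //.
by rewrite nth_ord_enum.
Qed.

Lemma triangle_free_labels k (T1 T2 T3 : eqType)
    (g1 : 'I_k -> T1) (g2 : 'I_k -> T2) (g3 : 'I_k -> T3) :
  triangle_free g1 g2 g3 ->
  triangle_freeb (iota 0 k) (nth 0 (labels (codom g1))) (nth 0 (labels (codom g2)))
    (nth 0 (labels (codom g3))).
Proof.
move=> tf; rewrite -val_enum_ord.
apply/allP => _ /mapP[a _ ->]; apply/allP => _ /mapP[b _ ->]; apply/allP => _ /mapP[c _ ->].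
rewrite !nth_labels_codom !index_codom_eq; apply/implyP => /and3P[/eqP e1 /eqP e2 /eqP e3].
by have [-> ->] := tf _ _ _ e1 e2 e3; rewrite !eqxx.
Qed.

Lemma canonical_labellings4_bound :
  let L := canonical_labellings 4 in
  all (fun s1 => all (fun s2 => all (fun s3 =>
    triangle_freeb (iota 0 4) (nth 0 s1) (nth 0 s2) (nth 0 s3) ==>
    (16 <= size (undup s1) * size (undup s2) * size (undup s3))) L) L) L.
Proof. by vm_compute. Qed.

Lemma triangle_free_nvalues (T1 T2 T3 : eqType)
    (g1 : 'I_4 -> T1) (g2 : 'I_4 -> T2) (g3 : 'I_4 -> T3) :
  triangle_free g1 g2 g3 -> 16 <= nvalues g1 * nvalues g2 * nvalues g3.
Proof.
move=> /triangle_free_labels tf.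
have mem (T : eqType) (g : 'I_4 -> T) : labels (codom g) \in canonical_labellings 4.
  by have := labels_canonical (codom g); rewrite size_codom card_ord.
rewrite /nvalues -(size_undup_labels (codom g1)) -(size_undup_labels (codom g2)).
rewrite -(size_undup_labels (codom g3)).
move/allP: canonical_labellings4_bound => /(_ _ (mem _ g1)) /allP /(_ _ (mem _ g2)).
by move=> /allP /(_ _ (mem _ g3)) /implyP; apply.
Qed.

(** * Runs on constant inputs *)

Section Simulation.

Variables n M : nat.
Implicit Types (P : protocol n M) (ps : seq (step n M)) (x : {ffun 'I_n -> 'I_M})
  (h : seq ('I_n * nat)).

Definition const_input (c : 'I_M) : {ffun 'I_n -> 'I_M} := [ffun=> c].

Fixpoint emitted ps x h : seq nat :=
  if ps is s :: ps' then
    let v := st_f s (x (st_T s)) (recv h (st_T s)) in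
    v :: emitted ps' x (rcons h (st_R s, v))
  else [::].

Lemma run_from_emitted ps x h :
  [seq p.2 | p <- run_from ps x h] = [seq p.2 | p <- h] ++ emitted ps x h.
Proof.
elim: ps h => [|s ps IH] h /=; first by rewrite cats0.
by rewrite IH map_rcons cat_rcons.
Qed.

Lemma symbol_emitted P l x : symbol P l x = nth 0 (emitted (steps P) x [::]) l.
Proof. by rewrite /symbol /trace run_from_emitted. Qed.

Lemma recv_rcons h r v i :
  recv (rcons h (r, v)) i = recv h i ++ (if r == i then [:: v] else [::]).
Proof. by rewrite /recv filter_rcons; case: ifP; rewrite ?map_rcons ?cats1 ?cats0. Qed.

(* [hc c] is the history reached by the run on the constant input [c]. *)
Lemma recv_run_from_const ps x h (hc : 'I_M -> seq ('I_n * nat)) :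
  (forall i, recv h i = recv (hc (x i)) i) ->
  (forall l : 'I_(size ps), let s := tnth (in_tuple ps) l in
     nth 0 (emitted ps (const_input (x (st_T s))) (hc (x (st_T s)))) l =
     nth 0 (emitted ps (const_input (x (st_R s))) (hc (x (st_R s)))) l) ->
  forall i, recv (run_from ps x h) i = recv (run_from ps (const_input (x i)) (hc (x i))) i.
Proof.
elim: ps h hc => [|s ps IH] h hc same_recv same_sym i /=; first exact: same_recv.
apply: (IH _ (fun c =>
  rcons (hc c) (st_R s, st_f s (const_input c (st_T s)) (recv (hc c) (st_T s))))) => [j|l].
  rewrite !recv_rcons same_recv; case: eqP => // <-; congr (_ ++ [:: _]).
  by have := same_sym ord0; rewrite /= !ffunE -same_recv => ->.
have := same_sym (lift ord0 l); rewrite /= !ffunE /bump /=.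
by rewrite !(tnth_nth s) /= add0n.
Qed.

Definition step_at P (l : 'I_(size (steps P))) : step n M := tnth (in_tuple (steps P)) l.

Definition const_views P x :=
  forall i, recv (trace P x) i = recv (trace P (const_input (x i))) i.

Lemma const_views_of_edges P x :
  (forall l : 'I_(size (steps P)),
     symbol P l (const_input (x (st_T (step_at l)))) =
     symbol P l (const_input (x (st_R (step_at l))))) ->
  const_views P x.
Proof.
move=> same_sym; apply: (recv_run_from_const (hc := fun _ => [::])) => // l.
by move=> s; rewrite -!symbol_emitted; exact: same_sym.
Qed.

Lemma all_equal_const c : all_equal (const_input c).
Proof. by move=> i j; rewrite !ffunE. Qed.

Lemma EQ_const_views P x i : const_views P x -> EQ P x i = EQ P (const_input (x i)) i.
Proof. by move=> views; rewrite /EQ views ffunE. Qed.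

Lemma solves_AD_const_views P : solves_AD P -> forall x, const_views P x -> all_equal x.
Proof.
move=> sol x views; apply/sol => i; rewrite (EQ_const_views i views).
exact: (proj2 (sol _) (all_equal_const _)).
Qed.

Lemma S_l_nvalues P l : S_l P l = nvalues (symbol P l).
Proof. by rewrite /S_l /nvalues codomE. Qed.

Lemma S_l_gt0 P l : 0 < M -> 0 < S_l P l.
Proof.
move=> M_gt0; rewrite S_l_nvalues -has_predT has_undup.
by apply/hasP; exists (symbol P l (const_input (Ordinal M_gt0))); rewrite ?codom_f.
Qed.

Definition joins (i j : 'I_n) (s : step n M) : bool :=
  ((st_T s == i) && (st_R s == j)) || ((st_T s == j) && (st_R s == i)).

Definition edge_view P (i j : 'I_n) (c : 'I_M) : seq nat :=
  [seq symbol P l (const_input c)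
  | l : 'I_(size (steps P)) <- enum 'I_(size (steps P)) & joins i j (step_at l)].

Lemma edge_view_eq P i j c d (l : 'I_(size (steps P))) :
  edge_view P i j c = edge_view P i j d -> joins i j (step_at l) ->
  symbol P l (const_input c) = symbol P l (const_input d).
Proof. by move=> /eq_in_map same jl; apply: same; rewrite mem_filter jl mem_enum. Qed.

Lemma nvalues_edge_view P i j :
  nvalues (edge_view P i j) <= \prod_(l < size (steps P) | joins i j (step_at l)) S_l P l.
Proof.
apply: leq_trans (nvalues_seq _ _) _; rewrite big_filter big_enum_cond.
by apply: leq_prod => l _; rewrite S_l_nvalues; exact: nvalues_comp.
Qed.

End Simulation.

Arguments const_input {n M} c.

Lemma solves_CD_const_views n M (P : protocol n.+1 M) :
  solves_CD P -> forall x, const_views P x -> all_equal x.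
Proof.
move=> sol x views; apply/sol; rewrite (EQ_const_views ord_max views).
exact: (proj2 (sol _) (all_equal_const _)).
Qed.

Definition node0 : 'I_3 := @Ordinal 3 0 isT.
Definition node1 : 'I_3 := @Ordinal 3 1 isT.
Definition node2 : 'I_3 := @Ordinal 3 2 isT.

Lemma all_equal3 M (x : {ffun 'I_3 -> 'I_M}) :
  x node0 = x node1 -> x node1 = x node2 -> all_equal x.
Proof.
move=> x01 x12; suff xE k : x k = x node0 by move=> i j; rewrite !xE.
case: k => [[|[|[|//]]] lt_k3]; [|rewrite x01|rewrite x01 x12];
  by congr (x _); apply: val_inj.
Qed.

Lemma edge_views_triangle_free M (P : protocol 3 M) :
  (forall x, const_views P x -> all_equal x) ->
  triangle_free (edge_view P node0 node1) (edge_view P node0 node2) (edge_view P node1 node2).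
Proof.
move=> fooled a b c e01 e02 e12.
pose x := [ffun i : 'I_3 => nth a [:: a; b; c] i].
suff eqx : all_equal x.
  by have := eqx node0 node1; have := eqx node1 node2; rewrite !ffunE /= => -> ->.
apply/fooled/const_views_of_edges => l.
move: (edge_view_eq (l := l) e01) (edge_view_eq (l := l) e02) (edge_view_eq (l := l) e12).
case: (step_at l) => [[[|[|[|//]]] ?] [[|[|[|//]]] ?] f]; rewrite /joins /= !ffunE /=;
  move=> E01 E02 E12; first [done | by rewrite E01 | by rewrite E02 | by rewrite E12].
Qed.

Lemma joins3_disjoint M (s : step 3 M) :
  (joins node0 node1 s -> joins node0 node2 s = false) /\
  (joins node0 node1 s || joins node0 node2 s -> joins node1 node2 s = false).
Proof. by case: s => [[[|[|[|//]]] ?] [[|[|[|//]]] ?] f]. Qed.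

Lemma prod_S_l_ge16 (P : protocol 3 4) :
  (forall x, const_views P x -> all_equal x) -> 16 <= \prod_(l < size (steps P)) S_l P l.
Proof.
move=> /edge_views_triangle_free /triangle_free_nvalues /leq_trans; apply.
apply: leq_trans (leq_mul (leq_mul (nvalues_edge_view _ _ _) (nvalues_edge_view _ _ _))
  (nvalues_edge_view _ _ _)) _.
rewrite -!prod_predU => [||l]; last by case: (joins3_disjoint (step_at l)).
  by apply: leq_prod_cond => l; exact: S_l_gt0.
by move=> l; case: (joins3_disjoint (step_at l)).
Qed.

Lemma ln2_gt0 : Rlt 0 (ln (INR 2)).
Proof. by rewrite -ln_1; apply: ln_increasing; simpl; lra. Qed.

Lemma log2R_1 : log2R (INR 1) = R0.
Proof. by rewrite /log2R /= ln_1 /Rdiv Rmult_0_l. Qed.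

Lemma log2R_mul (p q : nat) : 0 < p -> 0 < q ->
  log2R (INR (p * q)) = Rplus (log2R (INR p)) (log2R (INR q)).
Proof.
move=> p_gt0 q_gt0; rewrite /log2R mult_INR ln_mult.
  by rewrite /Rdiv Rmult_plus_distr_r.
all: by apply: lt_0_INR; apply/ltP.
Qed.

Lemma log2R_prod (I : Type) (r : seq I) (F : I -> nat) : (forall i, 0 < F i) ->
  \big[Rplus/R0]_(i <- r) log2R (INR (F i)) = log2R (INR (\prod_(i <- r) F i)).
Proof.
move=> F_gt0; elim: r => [|i r IH].
  by rewrite !big_nil log2R_1.
by rewrite !big_cons IH log2R_mul // prodn_gt0.
Qed.

Lemma log2R_le (p q : nat) : 0 < p -> p <= q -> Rle (log2R (INR p)) (log2R (INR q)).
Proof.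
move=> p_gt0 le_pq; apply: Rmult_le_compat_r.
  by apply/Rlt_le/Rinv_0_lt_compat; exact: ln2_gt0.
have INR_p_gt0 : Rlt 0 (INR p) by apply: lt_0_INR; apply/ltP.
have /Rle_lt_or_eq_dec[lt_pq|->] : Rle (INR p) (INR q) by apply: le_INR; apply/leP.
  by apply/Rlt_le/ln_increasing.
exact: Rle_refl.
Qed.

Lemma log2R_exp2 k : log2R (INR (2 ^ k)) = INR k.
Proof.
have log2R_2 : log2R (INR 2) = R1.
  by rewrite /log2R /Rdiv Rinv_r //; exact: Rgt_not_eq ln2_gt0.
elim: k => [|k IH]; first exact: log2R_1.
by rewrite expnS log2R_mul ?expn_gt0 // IH log2R_2 S_INR Rplus_comm.
Qed.

Lemma cost_log2R_prod n M (P : protocol n M) : 0 < M ->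
  cost P = log2R (INR (\prod_(l < size (steps P)) S_l P l)).
Proof. by move=> M_gt0; apply: log2R_prod => l; exact: S_l_gt0. Qed.

Lemma cost_ge4 (P : protocol 3 4) :
  (forall x, const_views P x -> all_equal x) -> Rle (INR 4) (cost P).
Proof.
move=> fooled; rewrite cost_log2R_prod // -(log2R_exp2 4).
by apply: log2R_le => //; exact: prod_S_l_ge16.
Qed.

Definition forwards n M (P : protocol n M) :=
  forall l : 'I_(size (steps P)), exists i, forall x, symbol P l x = val (x i).

Lemma prod_S_l_forwards n M (P : protocol n M) :
  forwards P -> \prod_(l < size (steps P)) S_l P l <= M ^ size (steps P).
Proof.
move=> fw; rewrite -[X in _ ^ X]card_ord -prod_nat_const; apply: leq_prod => l _.
have [i symbolE] := fw l; rewrite S_l_nvalues (eq_nvalues symbolE).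
apply: leq_trans (nvalues_comp (val : 'I_M -> nat) (fun x : {ffun 'I_n -> 'I_M} => x i)) _.
exact: leq_trans (nvalues_le_card _) (eq_leq (card_ord M)).
Qed.

Lemma cost_forwards n k (P : protocol n (2 ^ k)) :
  forwards P -> Rle (cost P) (INR (size (steps P) * k)).
Proof.
move=> fw; rewrite cost_log2R_prod ?expn_gt0 // -(log2R_exp2 (size _ * k)) mulnC expnM.
apply: log2R_le; last exact: prod_S_l_forwards.
by apply: prodn_gt0 => l; rewrite S_l_gt0 ?expn_gt0.
Qed.

Definition forward (i j : 'I_3) : step 3 4 := Step i j (fun a _ => val a).

Definition chain_protocol : protocol 3 4 :=
  @Protocol 3 4 [:: forward node0 node1; forward node1 node2]
    (fun i a r => (i != node0) && (nth 0 r 0 != val a)) isT.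

Definition star_protocol : protocol 3 4 :=
  @Protocol 3 4 [:: forward node0 node2; forward node1 node2]
    (fun _ a r => ~~ ((nth 0 r 0 == val a) && (nth 0 r 1 == val a))) isT.

Lemma chain_forwards : forwards chain_protocol.
Proof. by case=> [[|[|//]] ?]; [exists node0 | exists node1]. Qed.

Lemma star_forwards : forwards star_protocol.
Proof. by case=> [[|[|//]] ?]; [exists node0 | exists node1]. Qed.

Lemma chain_solves_AD : solves_AD chain_protocol.
Proof.
move=> x; split => [EQ0 | eqx].
  by apply: all_equal3; apply/val_inj/eqP; [move: (EQ0 node1) | move: (EQ0 node2)];
    rewrite /EQ /= => /negbFE.
case=> [[|[|[|//]]] ?]; rewrite /EQ //=.
all: by apply/negbTE; rewrite negbK; apply/eqP; congr val; exact: eqx.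
Qed.

Lemma star_solves_CD : solves_CD star_protocol.
Proof.
move=> x; rewrite /EQ (_ : ord_max = node2) /=; last exact: val_inj.
split=> [/negbFE/andP[/eqP x02 /eqP x12] | eqx].
  by apply: all_equal3; apply: ord_inj; rewrite ?x02 ?x12.
by rewrite (eqx node0 node2) (eqx node1 node2) !eqxx.
Qed.

Theorem mainTheorem9 : C_AD_is 3 4 (INR 4) /\ C_CD_is 2 4 (INR 4).
Proof.
split; split.
- by move=> _ [P [/solves_AD_const_views fooled ->]]; exact: cost_ge4.
- move=> m lb; apply: Rle_trans (cost_forwards (k := 2) chain_forwards).
  by apply: lb; exists chain_protocol; split; first exact: chain_solves_AD.
- by move=> _ [P [/solves_CD_const_views fooled ->]]; exact: cost_ge4.
- move=> m lb; apply: Rle_trans (cost_forwards (k := 2) star_forwards).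
  by apply: lb; exists star_protocol; split; first exact: star_solves_CD.
Qed.
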